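(* Let $(M,d)$ be a pointed metric space, let $\mu\in ba(\widetilde M)$ be optimal with $\|\mu\|=1$, let $\alpha>0$, and let $f\in B_{\mathrm{Lip}_0(M)}$ satisfy $(\Phi^*\mu)(f)>1-\alpha^2$. Let $A=\{(x,y)\in\widetilde M: f(m_{x,y})\ge1-\alpha\}$. Then $\mu(A)\ge1-\alpha$.
   Context: $M$ has base point $0$; $\mathrm{Lip}_0(M)$ is the real Banach space of Lipschitz $f\colon M\to\mathbb R$ with $f(0)=0$, normed by the best Lipschitz constant, with unit ball $B_{\mathrm{Lip}_0(M)}$. $\widetilde M=\{(x,y)\in M\times M:x\ne y\}$ and $f(m_{x,y})=(f(x)-f(y))/d(x,y)$. $ba(\widetilde M)$ is the Banach space of bounded finitely additive signed measures on the power set of $\widetilde M$ with norm $|\mu|(\widetilde M)$. $\Phi f(x,y)=(f(x)-f(y))/d(x,y)$ and $(\Phi^*\mu)(f)=\int_{\widetilde M}\Phi f\,d\mu$. A measure $\mu\in ba(\widetilde M)$ is called optimal if it is positive and $\|\Phi^*\mu\|=\|\mu\|$. *)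

From Stdlib Require Import Reals List Lra.
Open Scope R_scope.

Record is_metric (M : Type) (d : M -> M -> R) : Prop := {
  metric_nonneg : forall x y, 0 <= d x y;
  metric_eq0 : forall x y, d x y = 0 <-> x = y;
  metric_sym : forall x y, d x y = d y x;
  metric_tri : forall x y z, d x z <= d x y + d y z
}.

Definition Mt (M : Type) : Type := {p : M * M | fst p <> snd p}.

(* Phi f (x,y) = (f x - f y) / d(x,y), i.e. f(m_{x,y}) *)
Definition Phi (M : Type) (d : M -> M -> R) (f : M -> R) (p : Mt M) : R :=
  (f (fst (proj1_sig p)) - f (snd (proj1_sig p))) / d (fst (proj1_sig p)) (snd (proj1_sig p)).

Definition Lip0 (M : Type) (d : M -> M -> R) (z : M) (f : M -> R) : Prop :=
  f z = 0 /\ exists L, forall x y, Rabs (f x - f y) <= L * d x y.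

Definition unit_ball (M : Type) (d : M -> M -> R) (z : M) (f : M -> R) : Prop :=
  Lip0 M d z f /\ forall x y, x <> y -> Rabs (f x - f y) / d x y <= 1.

Definition emptyset {T : Type} : T -> Prop := fun _ => False.

Definition disjoint {T : Type} (A B : T -> Prop) : Prop := forall t, ~ (A t /\ B t).

Definition finitely_additive {T : Type} (mu : (T -> Prop) -> R) : Prop :=
  forall A B, disjoint A B -> mu (fun t => A t \/ B t) = mu A + mu B.

Definition bounded_measure {T : Type} (mu : (T -> Prop) -> R) : Prop :=
  exists B, forall E, Rabs (mu E) <= B.

Definition is_ba {T : Type} (mu : (T -> Prop) -> R) : Prop :=
  finitely_additive mu /\ bounded_measure mu.

Definition positive_measure {T : Type} (mu : (T -> Prop) -> R) : Prop :=
  forall E, 0 <= mu E.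

Definition pairwise_disjoint {T : Type} (l : list (T -> Prop)) : Prop :=
  forall i j, (i < j)%nat -> (j < length l)%nat ->
    disjoint (nth i l emptyset) (nth j l emptyset).

Definition lsum (l : list R) : R := fold_right Rplus 0 l.

Definition ba_norm_is {T : Type} (mu : (T -> Prop) -> R) (N : R) : Prop :=
  is_lub (fun r => exists l : list (T -> Prop), pairwise_disjoint l /\
            r = lsum (map (fun E => Rabs (mu E)) l)) N.

(* finite partitions of T, refinement, tagged Riemann sums; the integral is the
   Moore-Smith limit of tagged Riemann sums along the directed set of partitions *)
Definition partition {T : Type} (l : list (T -> Prop)) : Prop :=
  pairwise_disjoint l /\ forall t, exists i, (i < length l)%nat /\ nth i l emptyset t.

Definition refines {T : Type} (Q P : list (T -> Prop)) : Prop :=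
  forall i, (i < length Q)%nat -> exists j, (j < length P)%nat /\
    forall t, nth i Q emptyset t -> nth j P emptyset t.

Definition riemann_sum {T : Type} (mu : (T -> Prop) -> R) (g : T -> R)
    (Q : list (T -> Prop)) (tag : nat -> T) : R :=
  lsum (map (fun i => g (tag i) * mu (nth i Q emptyset)) (seq 0 (length Q))).

Definition is_integral {T : Type} (mu : (T -> Prop) -> R) (g : T -> R) (I : R) : Prop :=
  forall eps, 0 < eps -> exists P, partition P /\
    forall Q tag, partition Q -> refines Q P ->
      (forall i, (i < length Q)%nat -> (exists t, nth i Q emptyset t) ->
          nth i Q emptyset (tag i)) ->
      Rabs (riemann_sum mu g Q tag - I) < eps.

Definition PhiStar_is (M : Type) (d : M -> M -> R) (mu : (Mt M -> Prop) -> R)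
    (f : M -> R) (I : R) : Prop :=
  is_integral mu (Phi M d f) I.

Definition PhiStar_norm_is (M : Type) (d : M -> M -> R) (z : M)
    (mu : (Mt M -> Prop) -> R) (N : R) : Prop :=
  is_lub (fun r => exists f I, unit_ball M d z f /\ PhiStar_is M d mu f I /\ r = Rabs I) N.

Definition optimal (M : Type) (d : M -> M -> R) (z : M) (mu : (Mt M -> Prop) -> R) : Prop :=
  is_ba mu /\ positive_measure mu /\
  exists N, ba_norm_is mu N /\ PhiStar_norm_is M d z mu N.

From Pilot Require Import Defs.
From Stdlib Require Import Reals List Lra Lia Classical ClassicalEpsilon FunctionalExtensionality PropExtensionality.
Open Scope R_scope.

(* Since f is 1-Lipschitz, [Phi f <= 1] everywhere, and [Phi f < 1 - alpha] on the
   complement [B] of [A]. Integrating against the probability [mu] gives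
   [(Phi^* mu)(f) <= 1 - alpha * mu B], hence [alpha * mu B < alpha^2], i.e. [mu B < alpha].
   The integral is a limit of tagged Riemann sums, and after refining a partition by [B]
   each cell lies inside [B] or outside it, so the bound can be read off cell by cell. *)

Definition setT {T : Type} : T -> Prop := fun _ => True.
Definition setC {T : Type} (S : T -> Prop) : T -> Prop := fun t => ~ S t.
Definition setI {T : Type} (E S : T -> Prop) : T -> Prop := fun t => E t /\ S t.

Fixpoint bigU {T : Type} (l : list (T -> Prop)) : T -> Prop :=
  match l with
  | nil => emptyset
  | E :: l' => fun t => E t \/ bigU l' t
  end.

Lemma bigU_spec {T : Type} (l : list (T -> Prop)) (t : T) :
  bigU l t <-> exists i, (i < length l)%nat /\ nth i l emptyset t.
Proof.
  induction l as [|E l IH]; simpl.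
  - split; [intros [] | intros [i [hi _]]; lia].
  - rewrite IH. split.
    + intros [h | [i [hi h]]]; [exists 0%nat | exists (S i)]; split; auto; lia.
    + intros [[|i] [hi h]]; [left | right; exists i; split]; auto; lia.
Qed.

Lemma nth_map_setI {T : Type} (P : list (T -> Prop)) (S : T -> Prop) i t :
  nth i (map (fun E => setI E S) P) emptyset t <-> nth i P emptyset t /\ S t.
Proof.
  revert i; induction P as [|E P IH]; intros [|i]; simpl;
    [unfold emptyset; tauto .. | unfold setI; tauto | apply IH].
Qed.

Lemma lsum_le (f g : nat -> R) (l : list nat) :
  (forall i, In i l -> f i <= g i) -> lsum (map f l) <= lsum (map g l).
Proof.
  induction l as [|a l IH]; simpl; intros H; [lra|].
  pose proof (H a (or_introl eq_refl)).
  assert (lsum (map f l) <= lsum (map g l)) by auto. lra.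
Qed.

Lemma lsum_map_lincomb (f g : nat -> R) (c c' : R) (l : list nat) :
  lsum (map (fun i => c * f i - c' * g i) l) = c * lsum (map f l) - c' * lsum (map g l).
Proof. induction l as [|a l IH]; simpl; [|rewrite IH]; lra. Qed.

Lemma map_nth_seq {A B : Type} (F : A -> B) (d : A) (l : list A) :
  map (fun i => F (nth i l d)) (seq 0 (length l)) = map F l.
Proof.
  induction l as [|a l IH]; simpl; [reflexivity|].
  f_equal. rewrite <- seq_shift, map_map. exact IH.
Qed.

Section SplitPartition.

Variables (T : Type) (B : T -> Prop) (P : list (T -> Prop)).

Definition split_by : list (T -> Prop) :=
  map (fun E => setI E B) P ++ map (fun E => setI E (setC B)) P.

Lemma length_split_by : length split_by = (2 * length P)%nat.
Proof. unfold split_by. rewrite length_app, !length_map. lia. Qed.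

Lemma nth_split_by_lt i t :
  (i < length P)%nat -> nth i split_by emptyset t <-> nth i P emptyset t /\ B t.
Proof.
  intro hi. unfold split_by. rewrite app_nth1 by (rewrite length_map; exact hi).
  apply nth_map_setI.
Qed.

Lemma nth_split_by_ge i t :
  (length P <= i)%nat ->
  nth i split_by emptyset t <-> nth (i - length P) P emptyset t /\ ~ B t.
Proof.
  intro hi. unfold split_by. rewrite app_nth2 by (rewrite length_map; exact hi).
  rewrite length_map. exact (nth_map_setI P (setC B) _ t).
Qed.

Lemma split_by_cells i :
  (forall t, nth i split_by emptyset t -> B t) \/
  (forall t, nth i split_by emptyset t -> ~ B t).
Proof.
  destruct (Nat.lt_ge_cases i (length P)) as [hi | hi]; [left | right];
    intros t ht; [apply nth_split_by_lt in ht | apply nth_split_by_ge in ht]; tauto.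
Qed.

Lemma split_by_refines : refines split_by P.
Proof.
  intros i hi. rewrite length_split_by in hi.
  destruct (Nat.lt_ge_cases i (length P)) as [hlt | hge].
  - exists i. split; [exact hlt|]. intros t ht. apply nth_split_by_lt in ht; tauto.
  - exists (i - length P)%nat. split; [lia|].
    intros t ht. apply nth_split_by_ge in ht; tauto.
Qed.

Lemma split_by_partition : Defs.partition P -> Defs.partition split_by.
Proof.
  intros [Hd Hcover]. split.
  - intros i j hij hj t [hi htj]. rewrite length_split_by in hj.
    destruct (Nat.lt_ge_cases j (length P)) as [hjP | hjP].
    + apply nth_split_by_lt in hi; [|lia]. apply nth_split_by_lt in htj; [|exact hjP].
      apply (Hd i j hij hjP t). tauto.
    + apply nth_split_by_ge in htj; [|exact hjP].
      destruct (Nat.lt_ge_cases i (length P)) as [hiP | hiP].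
      * apply nth_split_by_lt in hi; tauto.
      * apply nth_split_by_ge in hi; [|exact hiP].
        apply (Hd (i - length P) (j - length P))%nat with t; [lia | lia | tauto].
  - intro t. destruct (Hcover t) as [j [hj ht]].
    destruct (classic (B t)) as [hB | hB].
    + exists j. split; [rewrite length_split_by; lia|]. apply nth_split_by_lt; auto.
    + exists (j + length P)%nat. split; [rewrite length_split_by; lia|].
      apply nth_split_by_ge; [lia|]. rewrite Nat.add_sub. auto.
Qed.

End SplitPartition.

Section PositiveMeasure.

Variables (T : Type) (mu : (T -> Prop) -> R).
Hypothesis mu_additive : finitely_additive mu.
Hypothesis mu_ge0 : positive_measure mu.

Lemma measure_ext (X Y : T -> Prop) : (forall t, X t <-> Y t) -> mu X = mu Y.
Proof.
  intro H. f_equal. apply functional_extensionality. intro t.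
  apply propositional_extensionality, H.
Qed.

Lemma measure_empty (X : T -> Prop) : (forall t, ~ X t) -> mu X = 0.
Proof.
  intro H. assert (HX : disjoint X X) by (intros t [h _]; exact (H t h)).
  pose proof (mu_additive X X HX) as Hadd.
  rewrite (measure_ext (fun t => X t \/ X t) X) in Hadd by tauto.
  lra.
Qed.

Lemma measure_le (X Y : T -> Prop) : (forall t, X t -> Y t) -> mu X <= mu Y.
Proof.
  intro H. rewrite (measure_ext Y (fun t => X t \/ (Y t /\ ~ X t))).
  - rewrite mu_additive by (intros t; tauto).
    pose proof (mu_ge0 (fun t => Y t /\ ~ X t)). lra.
  - intro t. specialize (H t). tauto.
Qed.

Lemma measure_setC (S : T -> Prop) : mu S + mu (setC S) = mu setT.
Proof.
  rewrite <- mu_additive by (intros t; unfold setC; tauto).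
  apply measure_ext. intro t. unfold setT, setC. tauto.
Qed.

Lemma lsum_measure_disjoint (l : list (T -> Prop)) :
  pairwise_disjoint l -> lsum (map mu l) = mu (bigU l).
Proof.
  induction l as [|E l IH]; simpl; intro Hd.
  - symmetry. apply measure_empty. intros t [].
  - rewrite IH by (intros i j hij hj; apply (Hd (S i) (S j)); simpl; lia).
    symmetry. apply mu_additive.
    intros t [hE hl]. apply bigU_spec in hl. destruct hl as [j [hj hjt]].
    apply (Hd 0%nat (S j) ltac:(lia) ltac:(simpl; lia) t). simpl. tauto.
Qed.

Lemma lsum_measure_setI (Q : list (T -> Prop)) (S : T -> Prop) :
  Defs.partition Q -> lsum (map (fun E => mu (setI E S)) Q) = mu S.
Proof.
  intros [Hd Hcover].
  rewrite <- (map_map (fun E => setI E S) mu), lsum_measure_disjoint.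
  - apply measure_ext. intro t. rewrite bigU_spec, length_map. split.
    + intros [i [_ h]]. apply nth_map_setI in h. tauto.
    + intro hS. destruct (Hcover t) as [i [hi h]].
      exists i. split; [exact hi|]. apply nth_map_setI. tauto.
  - intros i j hij hj t [hi htj]. rewrite length_map in hj.
    apply nth_map_setI in hi. apply nth_map_setI in htj.
    apply (Hd i j hij hj t). tauto.
Qed.

Lemma ba_norm_positive (N : R) : ba_norm_is mu N -> mu setT = N.
Proof.
  intros [Hub Hleast]. apply Rle_antisym.
  - apply Hub. exists (setT :: nil). split.
    + intros i j hij hj. simpl in hj. lia.
    + simpl. rewrite Rabs_right by apply Rle_ge, mu_ge0. lra.
  - apply Hleast. intros r [l [Hd ->]].
    rewrite (map_ext _ mu) by (intro E; apply Rabs_right, Rle_ge, mu_ge0).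
    rewrite lsum_measure_disjoint by exact Hd.
    apply measure_le. intros t _. exact Logic.I.
Qed.

Lemma inhabited_of_measure_setT : mu setT <> 0 -> inhabited T.
Proof.
  intro Hne. apply NNPP. intro Hempty. apply Hne, measure_empty.
  intros t _. exact (Hempty (inhabits t)).
Qed.

Section RiemannBound.

Variables (g : T -> R) (B : T -> Prop) (a b : R).
Hypothesis g_le : forall t, g t <= a.
Hypothesis g_le_on_B : forall t, B t -> g t <= b.

Lemma tagged_cell_le (E : T -> Prop) (t0 : T) :
  ((forall t, E t -> B t) \/ (forall t, E t -> ~ B t)) ->
  ((exists t, E t) -> E t0) ->
  g t0 * mu E <= a * mu (setI E setT) - (a - b) * mu (setI E B).
Proof.
  intros Hcell Htag.
  rewrite (measure_ext (setI E setT) E) by (intro t; unfold setI, setT; tauto).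
  pose proof (mu_ge0 E) as HE.
  destruct (classic (exists t, E t)) as [Hne | Hempty].
  - specialize (Htag Hne). destruct Hcell as [HinB | HoutB].
    + rewrite (measure_ext (setI E B) E) by (intro t; unfold setI; firstorder).
      pose proof (g_le_on_B t0 (HinB t0 Htag)). nra.
    + rewrite (measure_empty (setI E B)) by (intros t [hE hB]; exact (HoutB t hE hB)).
      pose proof (g_le t0). nra.
  - rewrite measure_empty by (intros t hE; eauto).
    rewrite (measure_empty (setI E B)) by (intros t [hE _]; eauto). lra.
Qed.

Lemma riemann_sum_le (Q : list (T -> Prop)) (tag : nat -> T) :
  Defs.partition Q ->
  (forall i, (forall t, nth i Q emptyset t -> B t) \/
             (forall t, nth i Q emptyset t -> ~ B t)) ->
  (forall i, (i < length Q)%nat -> (exists t, nth i Q emptyset t) ->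
     nth i Q emptyset (tag i)) ->
  riemann_sum mu g Q tag <= a * mu setT - (a - b) * mu B.
Proof.
  intros HQ Hcells Htag. unfold riemann_sum.
  rewrite <- (lsum_measure_setI Q setT), <- (lsum_measure_setI Q B) by exact HQ.
  rewrite <- (map_nth_seq (fun E => mu (setI E setT)) emptyset),
    <- (map_nth_seq (fun E => mu (setI E B)) emptyset), <- lsum_map_lincomb.
  apply lsum_le. intros i Hi. apply in_seq in Hi.
  apply tagged_cell_le; [apply Hcells | apply Htag; lia].
Qed.

End RiemannBound.

(* [inhabited T] is essential: on an empty type there are no tag functions, so every
   real number is an integral. *)
Lemma is_integral_le_split (g : T -> R) (B : T -> Prop) (a b I : R) :
  inhabited T -> is_integral mu g I ->
  (forall t, g t <= a) -> (forall t, B t -> g t <= b) ->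
  I <= a * mu setT - (a - b) * mu B.
Proof.
  intros Hinh HI g_le g_le_on_B. apply Rle_plus_epsilon. intros eps Heps.
  destruct (HI eps Heps) as [P [HP Hclose]].
  set (Q := split_by T B P).
  set (tag := fun i => epsilon Hinh (nth i Q emptyset)).
  assert (Htag : forall i, (i < length Q)%nat -> (exists t, nth i Q emptyset t) ->
                 nth i Q emptyset (tag i))
    by (intros i _ Hne; apply epsilon_spec, Hne).
  specialize (Hclose Q tag (split_by_partition T B P HP) (split_by_refines T B P) Htag).
  pose proof (riemann_sum_le g B a b g_le g_le_on_B Q tag
    (split_by_partition T B P HP) (split_by_cells T B P) Htag).
  apply Rabs_def2 in Hclose. lra.
Qed.

End PositiveMeasure.

Lemma unit_ball_Phi_le1 (M : Type) (d : M -> M -> R) (z : M) (f : M -> R) :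
  is_metric M d -> unit_ball M d z f -> forall p, Phi M d f p <= 1.
Proof.
  intros Hd [_ Hslope] [[x y] hxy]. unfold Phi; simpl in *.
  assert (Hpos : 0 < d x y).
  { destruct (metric_nonneg M d Hd x y) as [h | h]; [exact h|].
    exfalso. apply hxy, (metric_eq0 M d Hd). auto. }
  apply Rle_trans with (Rabs (f x - f y) / d x y); [|exact (Hslope x y hxy)].
  apply Rmult_le_compat_r; [left; apply Rinv_0_lt_compat, Hpos | apply Rle_abs].
Qed.

Theorem lemma3p1 (M : Type) (d : M -> M -> R) (z : M) (Hd : is_metric M d)
  (mu : (Mt M -> Prop) -> R) (Hopt : optimal M d z mu) (Hnorm : ba_norm_is mu 1)
  (alpha : R) (Halpha : 0 < alpha)
  (f : M -> R) (Hf : unit_ball M d z f)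
  (I : R) (HI : PhiStar_is M d mu f I) (HIgt : I > 1 - alpha ^ 2) :
  mu (fun p => Phi M d f p >= 1 - alpha) >= 1 - alpha.
Proof.
  destruct Hopt as [[Hadd _] [Hpos _]].
  set (A := fun p => Phi M d f p >= 1 - alpha).
  assert (Hmass : mu setT = 1) by exact (ba_norm_positive _ mu Hadd Hpos 1 Hnorm).
  assert (HinB : forall p, setC A p -> Phi M d f p <= 1 - alpha).
  { intros p hp. unfold setC, A in hp. lra. }
  assert (Hbound : I <= 1 * mu setT - (1 - (1 - alpha)) * mu (setC A)).
  { apply (is_integral_le_split _ mu Hadd Hpos (Phi M d f) (setC A)); auto.
    - apply (inhabited_of_measure_setT _ mu Hadd). lra.
    - apply (unit_ball_Phi_le1 M d z f Hd Hf). }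
  pose proof (measure_setC _ mu Hadd A) as Hsplit.
  assert (HB : mu (setC A) < alpha).
  { apply Rmult_lt_reg_l with alpha; [exact Halpha|]. simpl in HIgt. lra. }
  fold A. lra.
Qed.
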